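(* Let $T=(T,\eta,\mu)$ be a monad on a category $\mathbb{C}$. A morphism $f:A\rightsquigarrow B$ of $\mathsf{Kl}(T)$ is thunkable if and only if $\eta_{TB}\circ f^\sharp=T(\eta_B)\circ f^\sharp$ as morphisms $A\to TTB$ in $\mathbb{C}$.
   Context: $\mathsf{Kl}(T)$ has the objects of $\mathbb{C}$; morphisms $f:A\rightsquigarrow B$ correspond to $f^\sharp:A\to TB$; composition $(g\circledcirc f)^\sharp=\mu\circ T(g^\sharp)\circ f^\sharp$; identities $\eta$. Define $\mathsf{thunk}_A:A\rightsquigarrow TA$ by $\mathsf{thunk}_A^\sharp=\eta_{TA}\circ\eta_A$ and the functor $\tilde T:\mathsf{Kl}(T)\to\mathsf{Kl}(T)$ by $\tilde TA=TA$ and $(\tilde Tf)^\sharp=\eta_{TB}\circ\mu_B\circ T(f^\sharp)$. A morphism $f:A\rightsquigarrow B$ is thunkable if $\mathsf{thunk}_B\circledcirc f=\tilde Tf\circledcirc\mathsf{thunk}_A$. *)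

Set Implicit Arguments.

Record Category := {
  Ob :> Type;
  Hom : Ob -> Ob -> Type;
  comp : forall A B C : Ob, Hom B C -> Hom A B -> Hom A C;
  idm : forall A : Ob, Hom A A;
  comp_id_l : forall A B (f : Hom A B), comp (idm B) f = f;
  comp_id_r : forall A B (f : Hom A B), comp f (idm A) = f;
  comp_assoc : forall A B C D (h : Hom C D) (g : Hom B C) (f : Hom A B),
      comp h (comp g f) = comp (comp h g) f
}.

Arguments Hom {c} _ _.
Arguments comp {c A B C} _ _.
Arguments idm {c} A.

Notation "g \oc f" := (comp g f) (at level 40, left associativity).

Record Monad (C : Category) := {
  T : C -> C;
  fmap : forall A B : C, Hom A B -> Hom (T A) (T B);
  eta : forall A : C, Hom A (T A);
  mu : forall A : C, Hom (T (T A)) (T A);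
  fmap_id : forall A, fmap _ _ (idm A) = idm (T A);
  fmap_comp : forall A B D (g : Hom B D) (f : Hom A B),
      fmap _ _ (g \oc f) = fmap _ _ g \oc fmap _ _ f;
  eta_nat : forall A B (f : Hom A B), fmap _ _ f \oc eta A = eta B \oc f;
  mu_nat : forall A B (f : Hom A B),
      fmap _ _ f \oc mu A = mu B \oc fmap _ _ (fmap _ _ f);
  mu_eta_l : forall A, mu A \oc eta (T A) = idm (T A);
  mu_eta_r : forall A, mu A \oc fmap _ _ (eta A) = idm (T A);
  mu_assoc : forall A, mu A \oc fmap _ _ (mu A) = mu A \oc mu (T A)
}.

Arguments T {C} _ _.
Arguments fmap {C} _ {A B} _.
Arguments eta {C} _ A.
Arguments mu {C} _ A.

Section Kleisli.
Variables (C : Category) (M : Monad C).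

(* A Kleisli morphism f : A ~> B is given by f^# : A -> T B. *)
Definition KlHom (A B : C) := Hom A (T M B).

Definition kl_comp (A B D : C) (g : KlHom B D) (f : KlHom A B) : KlHom A D :=
  mu M D \oc fmap M g \oc f.

Definition kl_id (A : C) : KlHom A A := eta M A.

Definition thunk (A : C) : KlHom A (T M A) := eta M (T M A) \oc eta M A.

Definition Ttilde (A B : C) (f : KlHom A B) : KlHom (T M A) (T M B) :=
  eta M (T M B) \oc mu M B \oc fmap M f.

Definition thunkable (A B : C) (f : KlHom A B) : Prop :=
  @kl_comp A B (T M B) (thunk B) f =
  @kl_comp A (T M A) (T M B) (@Ttilde A B f) (thunk A).

End Kleisli.

Arguments thunkable {C} M {A B} f.


(* Both [thunk_A] and [thunk_B] are images of pure morphisms under the Kleisli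
   inclusion, so the monad unit laws collapse the two sides of the thunkability
   equation to [T(eta_B) o f^#] and [eta_{TB} o f^#] respectively. *)

#[local] Arguments kl_comp {C} M {A B D} g f.
#[local] Arguments Ttilde {C} M {A B} f.

Section KleisliPure.
Variables (C : Category) (M : Monad C).

Lemma kl_comp_pure_l (A B D : C) (h : Hom B D) (f : KlHom M A B) :
  kl_comp M (eta M D \oc h) f = fmap M h \oc f.
Proof.
  unfold kl_comp.
  rewrite fmap_comp, comp_assoc, mu_eta_r, comp_id_l.
  reflexivity.
Qed.

Lemma kl_comp_pure_r (A B D : C) (g : KlHom M B D) (h : Hom A B) :
  kl_comp M g (eta M B \oc h) = g \oc h.
Proof.
  unfold kl_comp.
  rewrite comp_assoc, <- (comp_assoc _ _ _ _ _ (mu M D)), eta_nat.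
  rewrite comp_assoc, mu_eta_l, comp_id_l.
  reflexivity.
Qed.

Lemma Ttilde_eta (A B : C) (f : KlHom M A B) :
  Ttilde M f \oc eta M A = eta M (T M B) \oc f.
Proof.
  unfold Ttilde.
  rewrite <- !comp_assoc, eta_nat.
  rewrite (comp_assoc _ _ _ _ _ (mu M B)), mu_eta_l, comp_id_l.
  reflexivity.
Qed.

End KleisliPure.

Theorem proposition3p13 (C : Category) (M : Monad C) (A B : C)
    (f : Hom A (T M B)) :
  thunkable M f <-> eta M (T M B) \oc f = fmap M (eta M B) \oc f.
Proof.
  unfold thunkable, thunk.
  rewrite kl_comp_pure_l, kl_comp_pure_r, Ttilde_eta.
  split; intro H; symmetry; exact H.
Qed.
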